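(* Fix $n\ge 2$ and a dictator agent $t\in\{1,\dots,n\}$. Let $f$ be the mechanism that on a profile $\mathbf{x}=(x_1,\dots,x_n)$ sets $l_1=x_t$, $d_A=\max_{j:\,x_j\le x_t}(x_t-x_j)$, $d_B=\max_{j:\,x_j\ge x_t}(x_j-x_t)$, and $l_2=l_1+\max\{2d_A,d_B\}$ if $d_A\le d_B$, and $l_2=l_1-\max\{d_A,2d_B\}$ otherwise; it outputs $\{l_1,l_2\}$. Then for every profile $\mathbf{x}\in\mathbb{R}^n$, $SC(f,\mathbf{x})\le(n-1)\,OPT(\mathbf{x})$.
   Context: Two-facility game on a line: agent $j$ has location $x_j\in\mathbb{R}$. For facility locations $\{l_1,l_2\}$, an agent at $y$ has cost $\min\{|l_1-y|,|l_2-y|\}$. $SC(f,\mathbf{x})$ is the sum over all agents of their costs under $f(\mathbf{x})$, and $OPT(\mathbf{x})=\min_{l_1,l_2\in\mathbb{R}}\sum_j\min\{|l_1-x_j|,|l_2-x_j|\}$. *)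

From HB Require Import structures.
From mathcomp Require Import all_boot all_order all_algebra.
From mathcomp Require Import classical_sets reals.
Set Implicit Arguments. Unset Strict Implicit. Unset Printing Implicit Defensive.
Import Order.TTheory GRing.Theory Num.Theory.
Local Open Scope ring_scope.
Local Open Scope classical_set_scope.

Definition agent_cost (R : realType) (l : R * R) (y : R) : R :=
  Num.min `|l.1 - y| `|l.2 - y|.

Definition cost (R : realType) (n : nat) (l : R * R) (x : 'I_n -> R) : R :=
  \sum_(j < n) agent_cost l (x j).

(* OPT(x) = inf over all l1 l2 of the social cost (the min is attained) *)
Definition OPT (R : realType) (n : nat) (x : 'I_n -> R) : R :=
  inf [set c | exists l : R * R, c = cost l x].

Definition dA (R : realType) (n : nat) (t : 'I_n) (x : 'I_n -> R) : R :=
  \big[Num.max/0]_(j < n | x j <= x t) (x t - x j).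
Definition dB (R : realType) (n : nat) (t : 'I_n) (x : 'I_n -> R) : R :=
  \big[Num.max/0]_(j < n | x t <= x j) (x j - x t).

Definition mech (R : realType) (n : nat) (t : 'I_n) (x : 'I_n -> R) : R * R :=
  let l1 := x t in
  let a := dA t x in
  let b := dB t x in
  (l1, if a <= b then l1 + Num.max (2 * a) b else l1 - Num.max a (2 * b)).

Definition SC (R : realType) (n : nat) (t : 'I_n) (x : 'I_n -> R) : R :=
  cost (mech t x) x.

(** Two facilities cannot serve three agents [u <= v <= w] at total cost below
    [min (v - u) (w - v)], because two of the three share a facility; hence
    [OPT] bounds every such gap between agents.  The mechanism puts [l1] on the
    dictator [c] and [l2] so far out that every agent [y] has cost at most one
    such gap, taken among [y], [c] and the extreme agents [c - dA], [c + dB].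
    The dictator pays nothing, so summing over the other [n - 1] agents gives
    the bound. *)
From HB Require Import structures.
From mathcomp Require Import all_boot all_order all_algebra.
From mathcomp Require Import classical_sets reals.
From mathcomp Require Import lra.
Import Order.TTheory GRing.Theory Num.Theory.
Local Open Scope ring_scope.

Section GapBound.
Context {R : realType}.

Definition gap_bounded (S : set R) (O : R) :=
  forall u v w, S u -> S v -> S w -> u <= v <= w -> Num.min (v - u) (w - v) <= O.

Lemma agent_cost_ge0 (l : R * R) (y : R) : 0 <= agent_cost l y.
Proof. by rewrite le_min !normr_ge0. Qed.

Lemma agent_cost_opp (l : R * R) (y : R) :
  agent_cost (- l.1, - l.2) (- y) = agent_cost l y.
Proof. by rewrite /agent_cost /= -!opprD !normrN. Qed.

Lemma agent_cost_triple (l : R * R) {u v w : R} : u <= v <= w ->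
  Num.min (v - u) (w - v) <= agent_cost l u + agent_cost l v + agent_cost l w.
Proof.
move=> /andP[uv vw]; have uw := le_trans uv vw.
have dist (z p q : R) : p <= q -> q - p <= `|z - p| + `|z - q|.
  move=> pq; rewrite -[q - p]ger0_norm ?subr_ge0 // distrC.
  by rewrite (le_trans (ler_distD z p q)) // distrC.
set m := Num.min _ _.
have mu : m <= v - u by rewrite ge_min lexx.
have mw : m <= w - v by rewrite ge_min lexx orbT.
clearbody m; rewrite /agent_cost !minEle.
have := dist l.1 u v uv; have := dist l.1 v w vw; have := dist l.1 u w uw.
have := dist l.2 u v uv; have := dist l.2 v w vw; have := dist l.2 u w uw.
have := normr_ge0 (l.1 - u); have := normr_ge0 (l.1 - v); have := normr_ge0 (l.1 - w).
have := normr_ge0 (l.2 - u); have := normr_ge0 (l.2 - v); have := normr_ge0 (l.2 - w).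
(* pigeonhole: two of the three agents are nearest to the same facility *)
case: (leP `|l.1 - u| `|l.2 - u|); case: (leP `|l.1 - v| `|l.2 - v|);
  by case: (leP `|l.1 - w| `|l.2 - w|); move=> *; lra.
Qed.

Lemma cost_ge0 {n} (l : R * R) (x : 'I_n -> R) : 0 <= cost l x.
Proof. by apply: sumr_ge0 => j _; apply: agent_cost_ge0. Qed.

Lemma OPT_ge {n} (x : 'I_n -> R) (m : R) : (forall l, m <= cost l x) -> m <= OPT x.
Proof.
move=> le_m_cost; apply: lb_le_inf; first by exists (cost (0, 0) x), (0, 0).
by move=> _ [l ->].
Qed.

Lemma OPT_ge0 {n} (x : 'I_n -> R) : 0 <= OPT x.
Proof. by apply: OPT_ge => l; apply: cost_ge0. Qed.

Lemma gap_bounded_OPT {n} (x : 'I_n -> R) : gap_bounded (range x) (OPT x).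
Proof.
move=> _ _ _ [p _ <-] [q _ <-] [r _ <-] pqr.
have [m_le0|] := leP (Num.min (x q - x p) (x r - x q)) 0.
  exact: le_trans m_le0 (OPT_ge0 x).
rewrite lt_min !subr_gt0 => /andP[ltpq ltqr].
have neq_pq : p != q by apply: contraTneq ltpq => ->; rewrite ltxx.
have neq_qr : q != r by apply: contraTneq ltqr => ->; rewrite ltxx.
have neq_pr : r != p by apply: contraTneq (lt_trans ltpq ltqr) => ->; rewrite ltxx.
apply: OPT_ge => l; apply: le_trans (agent_cost_triple l pqr) _.
rewrite /cost (bigD1 p) //= (bigD1 q) 1?eq_sym //= (bigD1 r) /= ?neq_pr 1?eq_sym //.
by rewrite !addrA lerDl; apply: sumr_ge0 => j _; apply: agent_cost_ge0.
Qed.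

Lemma gap_bounded_opp {S : set R} {O : R} :
  gap_bounded S O -> gap_bounded [set u | S (- u)] O.
Proof.
move=> gapS u v w Su Sv Sw /andP[uv vw].
rewrite minC -(opprK u) -(opprK v) -(opprK w) !opprK.
have := gapS (- w) (- v) (- u) Sw Sv Su; rewrite !lerN2 vw uv.
by rewrite !opprK (addrC (- v)) (addrC (- u)) => /(_ isT).
Qed.

Lemma agent_cost_dictator_le {S : set R} {O c a b y : R} : gap_bounded S O ->
  S (c - a) -> S c -> S (c + b) -> S y -> a <= b -> c - a <= y <= c + b ->
  agent_cost (c, c + Num.max (2 * a) b) y <= O.
Proof.
move=> gapS Sl Sc Sr Sy ab /andP[ly yr]; rewrite /agent_cost /=.
have dist (p q : R) : p <= q -> `|p - q| = q - p.
  by move=> pq; rewrite distrC ger0_norm // subr_ge0.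
have [yc|cy] := leP y c.
  apply: le_trans (gapS y c (c + b) Sy Sc Sr _); last by apply/andP; lra.
  rewrite ge_min (distrC c) (dist y c yc) le_min.
  by apply/orP; left; apply/andP; split; lra.
rewrite (dist c y (ltW cy)).
have [a2b|b2a] := leP (2 * a) b.
  apply: le_trans (gapS c y (c + b) Sc Sy Sr _); last by apply/andP; lra.
  by rewrite (distrC (c + b)) (dist y (c + b) yr).
apply: le_trans (gapS (c - a) c y Sl Sc Sy _); last by apply/andP; lra.
rewrite (distrC (c + 2 * a)) (dist y (c + 2 * a)); last lra.
rewrite le_min !ge_min; have [|] := leP (y - c) a => ?; apply/andP; split; apply/orP; lra.
Qed.

End GapBound.

Section Dictator.
Context {R : realType} {n : nat} (t : 'I_n) (x : 'I_n -> R).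

Lemma dA_ge0 : 0 <= dA t x.
Proof. exact: bigmax_ge_id. Qed.

Lemma dB_ge0 : 0 <= dB t x.
Proof. exact: bigmax_ge_id. Qed.

Lemma dA_le j : x t - dA t x <= x j.
Proof.
have [le_jt|] := leP (x j) (x t); last by have := dA_ge0; lra.
have := le_bigmax_cond 0 (P := fun i => x i <= x t) (fun i => x t - x i) le_jt.
by rewrite -/(dA t x); lra.
Qed.

Lemma dB_le j : x j <= x t + dB t x.
Proof.
have [le_tj|] := leP (x t) (x j); last by have := dB_ge0; lra.
have := le_bigmax_cond 0 (P := fun i => x t <= x i) (fun i => x i - x t) le_tj.
by rewrite -/(dB t x); lra.
Qed.

Lemma dA_attained : range x (x t - dA t x).
Proof.
rewrite /dA.
have [|j _ ->] := eq_bigmax (x := 0) t (fun i => x i <= x t) (fun i => x t - x i) (lexx _).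
  by move=> i; rewrite subr_ge0.
by exists j; rewrite // opprB addrC subrK.
Qed.

Lemma dB_attained : range x (x t + dB t x).
Proof.
rewrite /dB.
have [|j _ ->] := eq_bigmax (x := 0) t (fun i => x t <= x i) (fun i => x i - x t) (lexx _).
  by move=> i; rewrite subr_ge0.
by exists j; rewrite // addrC subrK.
Qed.

Lemma agent_cost_mech_dictator : agent_cost (mech t x) (x t) = 0.
Proof.
by apply/eqP; rewrite eq_le agent_cost_ge0 /agent_cost ge_min subrr normr0 lexx.
Qed.

Lemma agent_cost_mech_le_OPT j : agent_cost (mech t x) (x j) <= OPT x.
Proof.
rewrite /mech /=; case: ifP => [le_ab|/negbT].
  apply: agent_cost_dictator_le (gap_bounded_OPT x) _ _ _ _ le_ab _.
  - exact: dA_attained.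
  - by exists t.
  - exact: dB_attained.
  - by exists j.
  - by rewrite dA_le dB_le.
rewrite -ltNge => /ltW le_ba.
(* for [dB < dA] the mechanism is the mirror image, under [y |-> - y], of the case above *)
rewrite -agent_cost_opp /= opprD opprK maxC.
apply: agent_cost_dictator_le (gap_bounded_opp (gap_bounded_OPT x)) _ _ _ _ le_ba _.
- by rewrite /= opprD !opprK; apply: dB_attained.
- by rewrite /= opprK; exists t.
- by rewrite /= opprD !opprK; apply: dA_attained.
- by rewrite /= opprK; exists j.
- by have := dA_le j; have := dB_le j; lra.
Qed.

End Dictator.

Theorem mainTheorem9 (R : realType) (n : nat) (hn : (2 <= n)%N) (t : 'I_n)
  (x : 'I_n -> R) :
  SC t x <= (n - 1)%:R * OPT x.
Proof.
rewrite /SC /cost (bigD1 t) //= agent_cost_mech_dictator add0r.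
apply: le_trans (ler_sum _ (fun j _ => agent_cost_mech_le_OPT t x j)) _.
by rewrite sumr_const cardC1 card_ord mulr_natl subn1.
Qed.
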